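(* Let $n$ be a positive integer, let $\mathcal F$ be an $\mathcal N$-saturated family of subsets of $[n]$, and let $\mathcal G$ be a component of $\mathcal F$ with minimal elements $B_1,\dots,B_l$ and maximal elements $A_1,\dots,A_k$. Let $M\in\mathcal F$ satisfy $\bigcup_{j=1}^l B_j\subseteq M\subseteq\bigcap_{j=1}^k A_j$ and be minimal (with respect to inclusion) among sets of $\mathcal F$ with this property. Suppose $i\in[n]$, $i\notin M$ and $M\cup\{i\}\notin\mathcal F$. If $M\cup\{i\}$ is a maximal element of some induced copy of $\mathcal N$ in $\mathcal F\cup\{M\cup\{i\}\}$, then there exists an induced copy of $\mathcal N$ in $\mathcal F\cup\{M\cup\{i\}\}$ in which $M\cup\{i\}$ is the maximal element comparable to both minimal elements and $M$ is one of the minimal elements. Moreover, the number of $i\in[n]\setminus M$ such that $M\cup\{i\}\notin\mathcal F$ and $M\cup\{i\}$ is a maximal element of some induced copy of $\mathcal N$ in $\mathcal F\cup\{M\cup\{i\}\}$ is at most $|\mathcal F|-2$.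
   Context: The poset $\mathcal N$ has four elements $a,b,c,d$ with $a<c$, $b<c$, $b<d$ and no other comparabilities (so $a,b$ are its minimal elements, $c,d$ its maximal elements; $c$ is the unique maximal element comparable to both minimal elements). A family $\mathcal Q$ of sets (ordered by inclusion) contains an induced copy of $\mathcal N$ if there are distinct sets in $\mathcal Q$ whose inclusion relations are exactly those of $a,b,c,d$ above. A family $\mathcal F$ of subsets of $[n]=\{1,\dots,n\}$ is $\mathcal N$-saturated if $\mathcal F$ contains no induced copy of $\mathcal N$, but for every $S\subseteq[n]$ with $S\notin\mathcal F$, the family $\mathcal F\cup\{S\}$ contains an induced copy of $\mathcal N$. A component of $\mathcal F$ is the vertex set of a connected component of the Hasse diagram (as a graph) of the poset $(\mathcal F\setminus\{\emptyset,[n]\},\subseteq)$; its minimal and maximal elements are taken with respect to inclusion within the component. *)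

From mathcomp Require Import all_boot.
Set Implicit Arguments. Unset Strict Implicit. Unset Printing Implicit Defensive.

Section Defs.
Variable n : nat.
Notation S := {set 'I_n}.

(* (a,b,c,d) realise N exactly: a<c, b<c, b<d, and no other comparabilities.
   Distinctness of a,b,c,d follows from these conditions. *)
Definition is_N (a b c d : S) : bool :=
  [&& a \proper c, b \proper c, b \proper d,
      ~~ (a \subset b), ~~ (b \subset a),
      ~~ (c \subset d), ~~ (d \subset c),
      ~~ (a \subset d) & ~~ (d \subset a)].

Definition has_N (Q : {set S}) : Prop :=
  exists a b c d, [/\ a \in Q, b \in Q, c \in Q, d \in Q & is_N a b c d].

Definition N_saturated (F : {set S}) : Prop :=
  ~ has_N F /\ forall X : S, X \notin F -> has_N (X |: F).

Definition inner (F : {set S}) : {set S} := F :\: [set set0; setT].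

Definition covers (F : {set S}) (X Y : S) : bool :=
  [&& X \in inner F, Y \in inner F, X \proper Y &
      [forall Z, ~~ [&& Z \in inner F, X \proper Z & Z \proper Y]]].

Definition hasse (F : {set S}) : rel S :=
  fun X Y => covers F X Y || covers F Y X.

Definition component (F G : {set S}) : Prop :=
  exists2 X, X \in inner F & G = [set Y in inner F | connect (hasse F) X Y].

Definition minimal_in (G : {set S}) (B : S) : bool :=
  (B \in G) && [forall Y in G, ~~ (Y \proper B)].
Definition maximal_in (G : {set S}) (A : S) : bool :=
  (A \in G) && [forall Y in G, ~~ (A \proper Y)].

Definition between (G : {set S}) (M : S) : Prop :=
  (forall B, minimal_in G B -> B \subset M) /\
  (forall A, maximal_in G A -> M \subset A).

Definition max_in_some_N (Q : {set S}) (X : S) : bool :=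
  [exists a : S, exists b : S, exists c : S, exists d : S,
     [&& a \in Q, b \in Q, c \in Q, d \in Q, is_N a b c d
       & (X == c) || (X == d)]].

End Defs.

From mathcomp Require Import all_boot zify.
Set Implicit Arguments. Unset Strict Implicit. Unset Printing Implicit Defensive.

(* Saturation forces the minimal set [M] between the extremal elements of the
   component [G] to be comparable with every member of [G].  Indeed, a member
   of [G] incomparable with a set between is itself between (else [F] contains
   an induced N), so the intersection [V] of all sets of [F] between is
   comparable with all of [G]; no induced N can pass through such a [V], so
   saturation puts [V] in [F], and minimality gives [V = M].
   If [X = M :|: [set i]] is maximal in an induced N, comparability with [M]
   lets one replace a minimal element of that copy by [M]; the other minimal
   element [e] then satisfies [e :\: M = [set i]], so distinct [i] yield
   distinct members of [F] other than [set0] and [M]. *)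

Section Subsets.
Variable T : finType.
Implicit Types A B X Y Z : {set T}.

Definition incomparable A B := ~~ (A \subset B) && ~~ (B \subset A).

Lemma incomparable_nontrivial A B :
  incomparable A B -> (A != set0) && (A != setT).
Proof.
case/andP=> nAB nBA; apply/andP; split.
- by apply: contraNneq nAB => ->; apply: sub0set.
- by apply: contraNneq nBA => ->; apply: subsetT.
Qed.

Lemma nsubset_neq A B : ~~ (A \subset B) -> A != B.
Proof. by apply: contraNneq => ->. Qed.

Lemma mem_setU1_neq (Q : {set {set T}}) X Y : X \in Y |: Q -> X != Y -> X \in Q.
Proof. by rewrite in_setU1 => /orP[/eqP->|//]; rewrite eqxx. Qed.

Lemma sub_setU1_notin Z X i :
  Z \subset X :|: [set i] -> i \notin Z -> Z \subset X.
Proof.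
move=> /subsetP ZXi iZ; apply/subsetP => x xZ.
have := ZXi x xZ; rewrite !inE => /orP[//|/eqP xi].
by rewrite -xi xZ in iZ.
Qed.

Lemma setD_setU1 Z X i :
  Z \subset X :|: [set i] -> ~~ (Z \subset X) -> Z :\: X = [set i].
Proof.
move=> ZXi nZX; apply/eqP.
have : Z :\: X \subset [set i] by rewrite subDset.
by rewrite subset1 setD_eq0 (negbTE nZX) orbF.
Qed.

End Subsets.

Section NCopies.
Variable n : nat.
Implicit Types (a b c d x X Y : {set 'I_n}) (Q : {set {set 'I_n}}).

Lemma is_NE a b c d :
  is_N a b c d = [&& a \subset c, b \subset c, b \subset d, ~~ (b \subset a),
                     ~~ (d \subset c) & ~~ (a \subset d)].
Proof.
apply/idP/idP.
  case/and5P=> ac bc bd _ /and5P[nba _ ndc nad _].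
  by rewrite (proper_sub ac) (proper_sub bc) (proper_sub bd) nba ndc nad.
case/and5P=> ac bc bd nba /andP[ndc nad].
have nab : ~~ (a \subset b) by apply: contra nad => /subset_trans; apply.
have ncd : ~~ (c \subset d) by apply: contra nad => /(subset_trans ac).
have nda : ~~ (d \subset a) by apply: contra ndc => /subset_trans; apply.
have nca : ~~ (c \subset a) by apply: contra nba => /(subset_trans bc).
have ncb : ~~ (c \subset b) by apply: contra nab => /(subset_trans ac).
have ndb : ~~ (d \subset b) by apply: contra ndc => /subset_trans; apply.
by rewrite /is_N !properE ac bc bd nab nba ncd ndc nad nda nca ncb ndb.
Qed.

Lemma is_N_partner a b c d x :
  is_N a b c d -> x \in [:: a; b; c; d] ->
  exists2 y, y \in [:: a; b; c; d] & incomparable x y.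
Proof.
case/and5P=> _ _ _ nab /and5P[nba ncd ndc nad nda].
rewrite !inE => /or4P[]/eqP->.
- by exists b; rewrite ?inE ?eqxx ?orbT // /incomparable nab nba.
- by exists a; rewrite ?inE ?eqxx ?orbT // /incomparable nab nba.
- by exists d; rewrite ?inE ?eqxx ?orbT // /incomparable ncd ndc.
- by exists c; rewrite ?inE ?eqxx ?orbT // /incomparable ncd ndc.
Qed.

(* The Hasse diagram of N is the path a - c - b - d. *)
Lemma is_N_connected (P : pred {set 'I_n}) a b c d :
  is_N a b c d ->
  (forall Y Z, Z \in [:: a; b; c; d] -> P Y ->
     (Y \subset Z) || (Z \subset Y) -> P Z) ->
  has P [:: a; b; c; d] -> all P [:: a; b; c; d].
Proof.
case/and5P=> /proper_sub ac /proper_sub bc /proper_sub bd _ _ clP.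
have PE Y Z : Y \in [:: a; b; c; d] -> Z \in [:: a; b; c; d] ->
    Y \subset Z -> P Y = P Z.
  by move=> YN ZN YZ; apply/idP/idP => [PY|PZ];
    [apply: clP PY _ | apply: clP PZ _]; rewrite ?YZ ?orbT.
have Pac : P a = P c by apply: PE; rewrite ?inE ?eqxx ?orbT.
have Pbc : P b = P c by apply: PE; rewrite ?inE ?eqxx ?orbT.
have Pbd : P b = P d by apply: PE; rewrite ?inE ?eqxx ?orbT.
by rewrite /= -Pbd Pac Pbc; case: (P c).
Qed.

Lemma has_N_setU1 Q X :
  ~ has_N Q -> has_N (X |: Q) ->
  exists a b c d, [/\ is_N a b c d, X \in [:: a; b; c; d]
                    & {subset [:: a; b; c; d] <= X |: Q}].
Proof.
move=> noN [a [b [c [d [aQ bQ cQ dQ abcd]]]]].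
exists a, b, c, d; split=> //; last by apply/allP; rewrite /= aQ bQ cQ dQ.
apply/negPn/negP; rewrite !inE !negb_or => /and4P[Xa Xb Xc Xd].
by apply: noN; exists a, b, c, d;
  split=> //; apply: (mem_setU1_neq (Y := X)); rewrite // eq_sym.
Qed.

Lemma innerP Q Y : (Y \in inner Q) = [&& Y != set0, Y != setT & Y \in Q].
Proof. by rewrite !inE negb_or andbA. Qed.

Lemma inner_incomparable Q X Y :
  X \in Q -> ~~ (X \subset Y) -> ~~ (Y \subset X) -> X \in inner Q.
Proof.
rewrite innerP => XQ nXY nYX.
by have /incomparable_nontrivial/andP[-> ->] : incomparable X Y by apply/andP.
Qed.

Lemma N_saturated_set0 Q : N_saturated Q -> set0 \in Q.
Proof.
case=> noN satQ; apply/negPn/negP => /satQ/(has_N_setU1 noN).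
case=> [a [b [c [d [abcd N0 _]]]]].
by have [y _ /incomparable_nontrivial] := is_N_partner abcd N0; rewrite eqxx.
Qed.

Lemma connect_hasse_comparable Q X Y :
  X \in inner Q -> Y \in inner Q -> (X \subset Y) || (Y \subset X) ->
  connect (hasse Q) X Y.
Proof.
have proper_connect x y : x \in inner Q -> y \in inner Q -> x \proper y ->
    connect (hasse Q) x y.
  have [k] := ubnP (#|y| - #|x|); elim: k x y => // k IH x y ltk xi yi xy.
  case cov: [forall Z, ~~ [&& Z \in inner Q, x \proper Z & Z \proper y]].
    by apply: connect1; rewrite /hasse /covers xi yi xy cov.
  move/negbT: cov => /forallPn[Z /negPn/and3P[Zi xZ Zy]].
  have := proper_card xZ; have := proper_card Zy => ltZy ltxZ.
  by apply: connect_trans (IH x Z _ xi Zi xZ) (IH Z y _ Zi yi Zy); lia.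
move=> Xi Yi; rewrite !subEproper => /orP[/orP[/eqP->|XY]|/orP[/eqP->|YX]].
- exact: connect0.
- exact: proper_connect.
- exact: connect0.
- by rewrite (sym_connect_sym (fun x y => orbC _ _)) proper_connect.
Qed.

Definition betweenb Q Y :=
  [forall B, minimal_in Q B ==> (B \subset Y)] &&
  [forall A, maximal_in Q A ==> (Y \subset A)].

Lemma betweenP Q Y : reflect (between Q Y) (betweenb Q Y).
Proof.
apply: (iffP andP) => [[/forallP minY /forallP maxY]|[minY maxY]]; split.
- by move=> B; apply/implyP.
- by move=> A; apply/implyP.
- by apply/forallP => B; apply/implyP/minY.
- by apply/forallP => A; apply/implyP/maxY.
Qed.

Lemma minimal_inE Q B : minimal_in Q B = minset [in Q] B.
Proof.
apply/andP/minsetP => [[BQ /forall_inP minB]|[BQ minB]]; split=> //.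
  by move=> Y YQ YB; apply/eqP; rewrite eqEproper YB minB.
apply/forall_inP => Y YQ; apply/negP => YB.
by move: (YB); rewrite (minB Y YQ (proper_sub YB)) properxx.
Qed.

Lemma maximal_inE Q A : maximal_in Q A = maxset [in Q] A.
Proof.
apply/andP/maxsetP => [[AQ /forall_inP maxA]|[AQ maxA]]; split=> //.
  by move=> Y YQ AY; apply/eqP; rewrite eq_sym eqEproper AY maxA.
apply/forall_inP => Y YQ; apply/negP => AY.
by move: (AY); rewrite (maxA Y YQ (proper_sub AY)) properxx.
Qed.

Lemma minimal_exists Q Y : Y \in Q -> exists2 B, minimal_in Q B & B \subset Y.
Proof. by case/minset_exists=> B; rewrite -minimal_inE; exists B. Qed.

Lemma maximal_exists Q Y : Y \in Q -> exists2 A, maximal_in Q A & Y \subset A.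
Proof. by case/maxset_exists=> A; rewrite -maximal_inE; exists A. Qed.

Lemma minimal_in_sub Q B Y : minimal_in Q B -> Y \in Q -> Y \subset B -> Y = B.
Proof. by rewrite minimal_inE => /minsetinf; apply. Qed.

Lemma maximal_in_sup Q A Y : maximal_in Q A -> Y \in Q -> A \subset Y -> Y = A.
Proof. by rewrite maximal_inE => /maxsetsup; apply. Qed.

Lemma is_N_setU1_left (M b d : {set 'I_n}) i :
  i \notin M -> i \in b -> b \subset M :|: [set i] -> b \subset d ->
  ~~ (d \subset M :|: [set i]) -> ~~ (M :|: [set i] \subset d) ->
  is_N M b (M :|: [set i]) d.
Proof.
move=> iM ib bX bd ndX nXd; rewrite is_NE subsetUl bX bd ndX /=.
apply/andP; split; first by apply: contra iM => /subsetP; apply.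
by apply: contra nXd => Md; rewrite subUset Md sub1set (subsetP bd).
Qed.

Lemma is_N_setU1_right (a M d : {set 'I_n}) i :
  i \in a -> a \proper M :|: [set i] -> M \subset d ->
  ~~ (d \subset M :|: [set i]) -> ~~ (a \subset d) -> is_N a M (M :|: [set i]) d.
Proof.
move=> ia aX Md ndX nad.
rewrite is_NE (proper_sub aX) subsetUl Md ndX nad /= andbT.
by apply: contra (proper_subn aX) => Ma; rewrite subUset Ma sub1set.
Qed.

End NCopies.

Section Component.
Variables (n : nat) (F G : {set {set 'I_n}}).
Hypotheses (satF : N_saturated F) (compFG : component F G).

Lemma component_inner (Y : {set 'I_n}) : Y \in G -> Y \in inner F.
Proof. by case: compFG => X _ -> /setIdP[]. Qed.

Lemma component_mem (Y : {set 'I_n}) : Y \in G -> Y \in F.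
Proof. by move/component_inner; rewrite innerP => /and3P[]. Qed.

Lemma component_closed (Y Z : {set 'I_n}) :
  Y \in G -> Z \in inner F -> (Y \subset Z) || (Z \subset Y) -> Z \in G.
Proof.
case: compFG => X _ -> /setIdP[Yi XY] Zi YZ; apply/setIdP; split=> //.
exact: connect_trans XY (connect_hasse_comparable Yi Zi YZ).
Qed.

Lemma component_nonempty : exists Y, Y \in G.
Proof. by case: compFG => X Xi ->; exists X; apply/setIdP. Qed.

(* Otherwise a minimal (resp. maximal) element of [G] not below (above) [Y]
   forms an induced copy of N with [s], [Y] and a minimal (maximal) element of
   [G] below (above) [Y]. *)
Lemma between_incomparable (s Y : {set 'I_n}) :
  s \in F -> between G s -> Y \in G -> incomparable s Y -> between G Y.
Proof.
move=> sF [mins maxs] YG /andP[nsY nYs]; have [noN _] := satF.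
have YF := component_mem YG; split.
- move=> B' B'min; apply/negPn/negP => nB'Y.
  have [B Bmin BY] := minimal_exists YG.
  have /andP[B'G _] := B'min; have /andP[BG _] := Bmin.
  apply: noN; exists B', B, s, Y; split=> //; try exact: component_mem.
  rewrite is_NE (mins B' B'min) (mins B Bmin) BY nYs nB'Y /= andbT.
  by apply: contra nB'Y => BB'; rewrite -(minimal_in_sub B'min BG BB').
- move=> A' A'max; apply/negPn/negP => nYA'.
  have [A Amax YA] := maximal_exists YG.
  have /andP[A'G _] := A'max; have /andP[AG _] := Amax.
  apply: noN; exists Y, s, A, A'; split=> //; try exact: component_mem.
  rewrite is_NE YA (maxs A Amax) (maxs A' A'max) nsY nYA' /= andbT.
  by apply: contra nYA' => A'A; rewrite -(maximal_in_sup A'max AG A'A).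
Qed.

(* Adding [V] cannot create an induced copy of N: such a copy would lie in
   [G] together with [V] and contain an element incomparable with [V]. *)
Lemma comparable_sandwich_mem (V Y0 Y1 : {set 'I_n}) :
  Y0 \in G -> Y0 \subset V -> Y1 \in G -> V \subset Y1 ->
  (forall Y, Y \in G -> (Y \subset V) || (V \subset Y)) -> V \in F.
Proof.
move=> Y0G Y0V Y1G VY1 Vcomp; have [noN satF'] := satF.
apply/negPn/negP => /satF'/(has_N_setU1 noN)[a [b [c [d [abcd VN NVF]]]]].
pose P Z := (Z == V) || (Z \in G).
have clP Y Z : Z \in [:: a; b; c; d] -> P Y ->
    (Y \subset Z) || (Z \subset Y) -> P Z.
  move=> ZN PY YZ; rewrite /P; have [//|ZV /=] := eqVneq Z V.
  have [W _ /andP[nZW nWZ]] := is_N_partner abcd ZN.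
  have Zi := inner_incomparable (mem_setU1_neq (NVF Z ZN) ZV) nZW nWZ.
  case/orP: PY => [/eqP YV|YG]; last exact: component_closed YG Zi YZ.
  move: YZ; rewrite YV => /orP[VZ|ZV'].
  - by apply: component_closed Y0G Zi _; rewrite (subset_trans Y0V VZ).
  - by apply: component_closed Y1G Zi _; rewrite (subset_trans ZV' VY1) orbT.
have /allP allPN : all P [:: a; b; c; d].
  by apply: is_N_connected abcd clP _; apply/hasP; exists V; rewrite /P ?eqxx.
have [W WN /andP[nVW nWV]] := is_N_partner abcd VN.
have /orP[/eqP WV|WG] := allPN W WN; first by rewrite WV subxx in nVW.
by have := Vcomp W WG; rewrite (negbTE nVW) (negbTE nWV).
Qed.

Definition between_meet := \bigcap_(s in F | betweenb G s) s.

Lemma between_meet_comparable (Y : {set 'I_n}) :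
  Y \in G -> (Y \subset between_meet) || (between_meet \subset Y).
Proof.
move=> YG; case: (boolP [exists s in F, betweenb G s && (s \subset Y)]).
  case/exists_inP=> s sF /andP[bs sY]; apply/orP; right.
  by apply: subset_trans sY; apply: bigcap_inf; rewrite sF.
move/exists_inPn=> noSY; apply/orP; left; apply/bigcapsP => s /andP[sF bs].
apply/negPn/negP => nYs.
have nsY : ~~ (s \subset Y) by have := noSY s sF; rewrite bs.
have /betweenP bY : between G Y.
  by apply: between_incomparable sF _ YG _; [apply/betweenP | apply/andP].
by have := noSY Y (component_mem YG); rewrite bY subxx.
Qed.

Section MinimalBetween.
Variable M : {set 'I_n}.
Hypotheses (MF : M \in F) (Mbetween : between G M).
Hypothesis Mmin : forall M', M' \in F -> between G M' -> M' \subset M -> M' = M.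

Lemma between_mem_component : M \in G.
Proof.
have [minM maxM] := Mbetween; have [Y YG] := component_nonempty.
have [B Bmin _] := minimal_exists YG; have /andP[BG _] := Bmin.
have [A Amax _] := maximal_exists BG; have /andP[AG _] := Amax.
have := component_inner BG; rewrite innerP => /and3P[B0 _ _].
have := component_inner AG; rewrite innerP => /and3P[_ AT _].
apply: component_closed BG _ _; last by rewrite minM.
rewrite innerP MF andbT; apply/andP; split.
- by apply: contraNneq B0 => M0; rewrite -subset0 -M0 minM.
- by apply: contraNneq AT => MT; rewrite -subTset -MT maxM.
Qed.

Lemma minimal_between_comparable (Y : {set 'I_n}) :
  Y \in G -> (Y \subset M) || (M \subset Y).
Proof.
have [minM maxM] := Mbetween.
have meetM : between_meet \subset M.
  by apply: bigcap_inf; rewrite MF; apply/betweenP.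
have min_meet B : minimal_in G B -> B \subset between_meet.
  by move=> Bmin; apply/bigcapsP => s /andP[_ /betweenP[minS _]]; apply: minS.
have [Y0 Y0G] := component_nonempty; have [B0 B0min _] := minimal_exists Y0G.
have /andP[B0G _] := B0min.
have meetF : between_meet \in F.
  apply: comparable_sandwich_mem B0G (min_meet B0 B0min) between_mem_component
    meetM between_meet_comparable.
have bmeet : between G between_meet.
  by split=> // A Amax; apply: subset_trans meetM (maxM A Amax).
by rewrite -(Mmin meetF bmeet meetM); apply: between_meet_comparable.
Qed.

Section AddedPoint.
Variable i : 'I_n.
Hypothesis iM : i \notin M.
Local Notation X := (M :|: [set i]).

Lemma is_N_setU1_as_c a b d :
  is_N a b X d -> a \in X |: F -> b \in X |: F -> d \in X |: F ->
  exists a' b' d', [/\ a' \in X |: F, b' \in X |: F, d' \in X |: F,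
                       is_N a' b' X d' & (a' = M \/ b' = M)].
Proof.
move=> abXd aQ bQ dQ; have [noN _] := satF.
have MQ : M \in X |: F by rewrite setU1r.
case/and5P: (abXd) => aX bX bd nab /and5P[nba nXd ndX nad _].
have bF := mem_setU1_neq bQ (proper_neq bX).
have dF := mem_setU1_neq dQ (nsubset_neq ndX).
have [ib|/(sub_setU1_notin (proper_sub bX)) bM] := boolP (i \in b).
  exists M, b, d; split=> //; last by left.
  exact: is_N_setU1_left iM ib (proper_sub bX) (proper_sub bd) ndX nXd.
have bG : b \in G.
  apply: component_closed between_mem_component _ _; last by rewrite bM orbT.
  exact: inner_incomparable bF nba nab.
have [ia|/(sub_setU1_notin (proper_sub aX)) aM] := boolP (i \in a).
  have dG : d \in G.
    apply: component_closed bG _ _; last by rewrite (proper_sub bd).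
    exact: inner_incomparable dF ndX nXd.
  have Md : M \subset d.
    case/orP: (minimal_between_comparable dG) => // dM.
    by case/negP: ndX; apply: subset_trans dM (subsetUl _ _).
  exists a, M, d; split=> //; last by right.
  exact: is_N_setU1_right ia aX Md ndX nad.
case: noN; exists a, b, M, d; split=> //.
  exact: mem_setU1_neq aQ (proper_neq aX).
rewrite is_NE aM bM (proper_sub bd) nba nad /= andbT.
by apply: contra ndX => dM; apply: subset_trans dM (subsetUl _ _).
Qed.

Lemma is_N_setU1_as_d_mem a b c :
  is_N a b c X -> a \in X |: F -> b \in X |: F -> c \in X |: F -> i \in b.
Proof.
case/and5P=> ac bc bX nab /and5P[nba ncX nXc naX _] aQ bQ cQ.
apply/negPn/negP => /(sub_setU1_notin (proper_sub bX)) bM.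
have bF := mem_setU1_neq bQ (proper_neq bX).
have cF := mem_setU1_neq cQ (nsubset_neq ncX).
have aF := mem_setU1_neq aQ (nsubset_neq naX).
have bG : b \in G.
  apply: component_closed between_mem_component _ _; last by rewrite bM orbT.
  exact: inner_incomparable bF nba nab.
have cG : c \in G.
  apply: component_closed bG _ _; last by rewrite (proper_sub bc).
  exact: inner_incomparable cF ncX nXc.
have aG : a \in G.
  apply: component_closed cG _ _; last by rewrite (proper_sub ac) orbT.
  exact: inner_incomparable aF nab nba.
case/orP: (minimal_between_comparable aG) => [aM|Ma].
- by case/negP: naX; apply: subset_trans aM (subsetUl _ _).
- by case/negP: nba; apply: subset_trans bM Ma.
Qed.

Lemma max_in_some_N_setU1 :
  max_in_some_N (X |: F) X ->
  exists a b d, [/\ a \in X |: F, b \in X |: F, d \in X |: F,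
                     is_N a b X d & (a = M \/ b = M)].
Proof.
case/existsP=> a /existsP[b /existsP[c /existsP[d]]].
case/and5P=> aQ bQ cQ dQ /andP[abcd /orP[]/eqP XE]; rewrite -XE in abcd.
  exact: is_N_setU1_as_c abcd aQ bQ dQ.
have ib := is_N_setU1_as_d_mem abcd aQ bQ cQ.
case/and5P: abcd => _ bc bX _ /and5P[_ ncX nXc _ _].
exists M, b, c; split=> //; first by rewrite setU1r.
  exact: is_N_setU1_left ib (proper_sub bX) (proper_sub bc) ncX nXc.
by left.
Qed.

End AddedPoint.

(* Each counted [i] is [e :\: M] for the other minimal element [e] of the copy
   of N given by [max_in_some_N_setU1], and such an [e] is a member of [F]
   different from [set0] and [M]. *)
Lemma card_max_in_some_N_setU1 :
  #|[set i : 'I_n | [&& i \notin M, (M :|: [set i]) \notin F &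
       max_in_some_N ((M :|: [set i]) |: F) (M :|: [set i])]]| + 2 <= #|F|.
Proof.
have M0 : M != set0.
  by have := component_inner between_mem_component; rewrite innerP => /andP[].
have sub2F : [set set0; M] \subset F.
  by rewrite subUset !sub1set (N_saturated_set0 satF) MF.
have <- : #|F :\: [set set0; M]| + 2 = #|F|.
  by rewrite -(cardsID [set set0; M] F) (setIidPr sub2F) cards2 eq_sym M0 addnC.
rewrite leq_add2r -(card_imset _ set1_inj).
apply: leq_trans (leq_imset_card (fun e => e :\: M) _).
apply/subset_leq_card/subsetP => _ /imsetP[i + ->].
rewrite inE => /and3P[iM _ maxN].
have [a [b [d [aQ bQ _ abXd aMbM]]]] := max_in_some_N_setU1 iM maxN.
case/and5P: abXd => aX bX _ nab /and5P[nba _ _ _ _].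
have [e [eQ eX neM]] : exists e, [/\ e \in (M :|: [set i]) |: F,
    e \proper M :|: [set i] & ~~ (e \subset M)].
  case: aMbM => [aM|bM]; first by exists b; rewrite aM in nba.
  by exists a; rewrite bM in nab.
apply/imsetP; exists e; last by rewrite (setD_setU1 (proper_sub eX) neM).
rewrite !inE (mem_setU1_neq eQ (proper_neq eX)) andbT negb_or.
by apply/andP; split; apply: contraNneq neM => ->; rewrite ?sub0set.
Qed.

End MinimalBetween.
End Component.

Theorem lemma3p3 (n : nat) (F G : {set {set 'I_n}}) (M : {set 'I_n}) :
  0 < n ->
  N_saturated F ->
  component F G ->
  M \in F ->
  between G M ->
  (forall M', M' \in F -> between G M' -> M' \subset M -> M' = M) ->
  (forall i : 'I_n, i \notin M -> (M :|: [set i]) \notin F ->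
     max_in_some_N ((M :|: [set i]) |: F) (M :|: [set i]) ->
     exists a b d,
       [/\ a \in (M :|: [set i]) |: F, b \in (M :|: [set i]) |: F,
           d \in (M :|: [set i]) |: F,
           is_N a b (M :|: [set i]) d & (a = M \/ b = M)])
  /\
  (#|[set i : 'I_n | [&& i \notin M, (M :|: [set i]) \notin F &
        max_in_some_N ((M :|: [set i]) |: F) (M :|: [set i]) ]]| + 2
     <= #|F|).
Proof.
move=> _ satF compFG MF bM Mmin; split.
  by move=> i iM _; apply: (max_in_some_N_setU1 satF compFG MF bM Mmin iM).
exact: (card_max_in_some_N_setU1 satF compFG MF bM Mmin).
Qed.
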